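(* Let $X$ be a compact subset of $\mathbb{R}^n_\infty$. Then for every $X$-surrounding point $p$, the function $d_\infty^X(p,\cdot)=d_\infty(p,\cdot)|_X$ is minimal, i.e. $\iota_X(\mathcal{F}(X))\subseteq\mathbf{E}(X)$, where $\iota_X(z)=d_\infty^X(z,\cdot)$. In addition, the map $\iota_X:\mathcal{F}(X)\to\mathbf{E}(X)$ preserves distances; thus $\mathcal{F}(X)$ isometrically embeds into $\mathbf{E}(X)$.
   Context: $\mathbb{R}^n_\infty$ is $\mathbb{R}^n$ with the $\ell^\infty$-metric $d_\infty$. For $1\le i\le n$, $\Lambda_i=\{x:x_i=\|x\|_\infty\}$ and $p+\xi\Lambda_i=\{p+\xi z:z\in\Lambda_i\}$ for $\xi\in\{\pm1\}$. A point $p$ is $X$-surrounding if $(p+\xi\Lambda_i)\cap X\ne\emptyset$ for all $i$ and $\xi$; $\mathcal{F}(X)$ is the set of such points with metric $d_\infty$. $\Delta(X)=\{f:X\to\mathbb{R}\text{ bounded}:f(x)+f(x')\ge d_\infty(x,x')\}$, a function in $\Delta(X)$ is minimal if no other element of $\Delta(X)$ lies pointwise below it, and the tight span $\mathbf{E}(X)$ is the set of minimal elements with the sup-norm metric. *)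

(* Points of R^n are row vectors 'rV[R]_n; the
   library norm on matrices is the max-of-absolute-values (sup) norm, so
   `|x - y| is exactly the l^infty distance d_infty. *)
From HB Require Import structures.
From mathcomp Require Import all_boot all_order all_algebra.
From mathcomp Require Import all_classical all_reals all_analysis.
Set Implicit Arguments. Unset Strict Implicit. Unset Printing Implicit Defensive.
Import Order.TTheory GRing.Theory Num.Theory.
Import numFieldNormedType.Exports.
Local Open Scope classical_set_scope.
Local Open Scope ring_scope.

Definition dinf {R : realType} {n : nat} (x y : 'rV[R]_n) : R := `|x - y|.

Definition Lambda {R : realType} {n : nat} (i : 'I_n) : set 'rV[R]_n :=
  [set x : 'rV[R]_n | x ord0 i = `|x|].

Definition surrounding {R : realType} {n : nat} (X : set 'rV[R]_n) (p : 'rV[R]_n) : Prop :=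
  forall (i : 'I_n) (xi : R), (xi = 1 \/ xi = -1) ->
    exists z, Lambda i z /\ X (p + xi *: z).

Definition surrounding_set {R : realType} {n : nat} (X : set 'rV[R]_n) : set 'rV[R]_n :=
  [set p | surrounding X p].

(* Delta(X): functions X -> R (represented as functions on R^n, only their
   values on X matter) that are bounded on X and satisfy
   f x + f x' >= d_infty(x, x') for x, x' in X. *)
Definition Delta {R : realType} {n : nat} (X : set 'rV[R]_n) : set ('rV[R]_n -> R) :=
  [set f | (exists M : R, forall x, X x -> `|f x| <= M) /\
           (forall x x', X x -> X x' -> dinf x x' <= f x + f x')].

Definition minimal {R : realType} {n : nat} (X : set 'rV[R]_n) (f : 'rV[R]_n -> R) : Prop :=
  Delta X f /\
  forall g, Delta X g -> (forall x, X x -> g x <= f x) -> forall x, X x -> g x = f x.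

Definition tight_span {R : realType} {n : nat} (X : set 'rV[R]_n) : set ('rV[R]_n -> R) :=
  [set f | minimal X f].

Definition sup_dist {R : realType} {n : nat} (X : set 'rV[R]_n) (f g : 'rV[R]_n -> R) : R :=
  sup [set `|f x - g x| | x in X].

Definition iota_X {R : realType} {n : nat} (z : 'rV[R]_n) : 'rV[R]_n -> R :=
  fun x => dinf z x.

(** For a surrounding point [p] and any [a <> p], pick a coordinate [i] where
    [a - p] attains its sup norm, with sign [s].  The surrounding condition
    yields [y = p - s z] in [X] with [z_i = |z|]; along coordinate [i] the
    displacements [a - p] and [p - y] point the same way, so
    [|a - y| = |a - p| + |p - y|].  Taking [a] in [X] makes [d(p, .)] tight,
    hence minimal in [Delta(X)]; taking [a = q] shows that [y] realises
    [|d(p, y) - d(q, y)| = d(p, q)], the sup-distance between [iota_X p] and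
    [iota_X q]. *)
From mathcomp Require Import all_boot all_order all_algebra.
From mathcomp Require Import all_classical all_reals all_analysis.
From mathcomp Require Import ring lra.
Set Implicit Arguments. Unset Strict Implicit. Unset Printing Implicit Defensive.
Import Order.TTheory GRing.Theory Num.Theory.
Import numFieldNormedType.Exports.
Local Open Scope classical_set_scope.
Local Open Scope ring_scope.

Lemma ler_mx_norm_coef (K : realDomainType) (m n : nat) (x : 'M[K]_(m, n)) i j :
  `|x i j| <= `|x|.
Proof. by rewrite [leRHS]/Num.Def.normr /= mx_normrE (le_bigmax _ _ (i, j)). Qed.

Lemma surrounding_far_point (R : realType) (n : nat) (X : set 'rV[R]_n) (p a : 'rV[R]_n) :
  surrounding X p -> a != p ->
  exists2 y, X y & `|a - p| + `|p - y| <= `|a - y|.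
Proof.
move=> hp; rewrite -subr_eq0 -normr_eq0 => /mx_norm_neq0 [[i0 i] /= ap_i].
rewrite (ord1 i0) in ap_i.
have [s s_sign ap_s] : exists2 s : R, s = 1 \/ s = -1 & (a - p) ord0 i = s * `|a - p|.
  have [ge0|lt0] := lerP 0 ((a - p) ord0 i).
    by exists 1; [left | rewrite mul1r [`|a - p|]ap_i ger0_norm].
  by exists (-1); [right | rewrite mulN1r [`|a - p|]ap_i ltr0_norm // opprK].
have norm_s : `|s| = 1 by case: s_sign => ->; rewrite ?normrN normr1.
have [z [Lz Xz]] : exists z, Lambda i z /\ X (p + (- s) *: z).
  by apply: hp; case: s_sign => ->; [right | left; rewrite opprK].
rewrite scaleNr in Xz; exists (p - s *: z) => //.
have -> : `|p - (p - s *: z)| = `|z| by rewrite opprB addrCA subrr addr0 normrZ norm_s mul1r.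
have coef_i : (a - (p - s *: z)) ord0 i = s * (`|a - p| + `|z|).
  by rewrite mulrDr -ap_s -(Lz : z ord0 i = `|z|) !mxE; ring.
have := ler_mx_norm_coef (a - (p - s *: z) : 'rV[R]_n) ord0 i.
by rewrite coef_i normrM norm_s mul1r ger0_norm // addr_ge0.
Qed.

Lemma Delta_iota (R : realType) (n : nat) (X : set 'rV[R]_n) (p : 'rV[R]_n) :
  bounded_set X -> Delta X (iota_X p).
Proof.
move=> /pinfty_ex_gt0 [M _ XM]; split.
  exists (`|p| + M) => x Xx; rewrite /iota_X /dinf normr_id.
  by apply: le_trans (ler_normB _ _) _; rewrite lerD2l XM.
by move=> x x' _ _; rewrite /iota_X /dinf (distrC p x) ler_distD.
Qed.

Lemma minimal_of_tight (R : realType) (n : nat) (X : set 'rV[R]_n) (f : 'rV[R]_n -> R) :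
  Delta X f -> (forall x, X x -> exists2 y, X y & f x + f y <= dinf x y) ->
  minimal X f.
Proof.
move=> Df tight; split=> // g [_ Dg] gf x Xx.
have [y Xy fxy] := tight x Xx.
by have := Dg x y Xx Xy; have := gf x Xx; have := gf y Xy; lra.
Qed.

Lemma iota_tight (R : realType) (n : nat) (X : set 'rV[R]_n) (p x : 'rV[R]_n) :
  surrounding X p -> X x -> exists2 y, X y & iota_X p x + iota_X p y <= dinf x y.
Proof.
move=> hp Xx; have [<- | xp] := eqVneq x p.
  by exists x => //; rewrite /iota_X /dinf subrr normr0 addr0.
have [y Xy far] := surrounding_far_point hp xp.
by exists y => //; rewrite /iota_X /dinf distrC.
Qed.

Lemma sup_image_attained (R : realType) (T : Type) (A : set T) (f : T -> R) (d : R) :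
  (forall x, A x -> f x <= d) -> (exists2 y, A y & f y = d) -> sup (f @` A) = d.
Proof.
move=> le_d [y Ay fyE]; rewrite -fyE in le_d *.
apply/eqP; rewrite eq_le; apply/andP; split.
  by apply: ge_sup; [exists (f y), y | move=> _ [x Ax <-]; exact: le_d].
by apply: ub_le_sup; [exists (f y) => _ [x Ax <-]; exact: le_d | exists y].
Qed.

Lemma sup_dist_iota (R : realType) (n : nat) (X : set 'rV[R]_n) (p q : 'rV[R]_n) :
  surrounding X p -> sup_dist X (iota_X p) (iota_X q) = dinf p q.
Proof.
move=> hp; have [-> | qp] := eqVneq q p.
  rewrite /sup_dist /dinf subrr normr0; have [-> | /set0P [x Xx]] := eqVneq X set0.
    by rewrite image_set0 sup0.
  apply: sup_image_attained => [y _ | ]; last exists x => //.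
    by rewrite subrr normr0.
  by rewrite subrr normr0.
have le_dpq x : `|iota_X p x - iota_X q x| <= dinf p q.
  by apply: le_trans (ler_dist_dist _ _) _; rewrite opprB addrA subrK.
apply: sup_image_attained => [x _ | ]; first exact: le_dpq.
have [y Xy far] := surrounding_far_point hp qp.
exists y => //; apply/eqP; rewrite eq_le le_dpq /=.
rewrite /iota_X /dinf distrC (distrC q y) (distrC p y) in far *.
by rewrite ler_normr; apply/orP; right; lra.
Qed.

Theorem proposition5p4 (R : realType) (n : nat) (X : set 'rV[R]_n) :
  compact X ->
  (forall p, surrounding_set X p -> tight_span X (iota_X p)) /\
  (forall p q, surrounding_set X p -> surrounding_set X q ->
     sup_dist X (iota_X p) (iota_X q) = dinf p q).
Proof.
move=> /compact_bounded bX; split=> [p hp | p q hp _].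
  exact: minimal_of_tight (Delta_iota p bX) (fun x => iota_tight hp).
exact: sup_dist_iota.
Qed.
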